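(* Let $f : \mathit{Ref} \to \mathit{Expr}$ be a well-formed spreadsheet. Then: (1) there is no infinite sequence of one-step spreadsheet evaluations $$\rho_1 \xrightarrow{p_1,q_1,\Lambda_1,L_1}_f \rho_2 \xrightarrow{p_2,q_2,\Lambda_2,L_2}_f \rho_3 \;\cdots\; \rho_k \xrightarrow{p_k,q_k,\Lambda_k,L_k}_f \rho_{k+1} \;\cdots;$$ (2) for every state $\rho$ and every expression $e$, there is no infinite derivation tree (built from the evaluation rules) whose conclusion is $e \Downarrow_\rho c, w$ for some number $c$ and bookkeeping tuple $w$.
   Context: Expressions of the abstract spreadsheet language are generated by the grammar $$e ::= c \mid r \mid \mathit{op}_l(e_1,\dots,e_n) \mid \mathbf{if}\; e_1\, e_2\, e_3 \mid \mathbf{obs}(c, \mathit{erp}_l(e_1,\dots,e_n)),\qquad \mathit{op} ::= \mathit{prim} \mid \mathit{black} \mid \mathit{erp},$$ where $c$ ranges over constant numbers, $r$ over cell references, $l$ over labels (each application carries a unique label), $\mathit{prim}$ over deterministic primitive operators (e.g. $+$, $\log$), $\mathit{black}$ over user-defined black-box operators (possibly stochastic, sampling $c \sim \mathit{black}(c_1,\dots,c_n)$), and $\mathit{erp}$ over elementary random procedures (Gaussian, Choice, Between, Near). $\mathit{Expr}$ is the set of all such expressions. A spreadsheet is a finite map $f:\mathit{Ref}\to\mathit{Expr}$ ($\mathit{Ref}$ finite). It is well-formed if the directed graph with vertices $\mathit{Ref}$ and edges $\{(r,r') : r \text{ occurs in } f(r')\}$ has no cycle. Fix a topological enumeration of $\mathit{Ref}$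 for this graph and write $r \prec r'$ if $r$ appears before $r'$. A state $\rho$ is a function from a subset $\mathrm{dom}(\rho)\subseteq \mathit{Ref}$ to numbers such that $r \prec r'$ and $r'\in\mathrm{dom}(\rho)$ imply $r \in \mathrm{dom}(\rho)$. Bookkeeping tuples are $w=(p,q,\Lambda,L)$ with $p,q$ reals, $\Lambda$ either a finite map from labels to real sequences or the symbol $\bot$, and $L$ a finite sequence of labels. Define $(p,q,\Lambda,L)\oplus(p',q',\Lambda',L') = (p+p',q+q',\Lambda'',\mathit{concat}(L,L'))$, where $\Lambda''(\lambda)=\Lambda(\lambda)$ if $\lambda\in\mathrm{dom}(\Lambda)$, else $\Lambda'(\lambda)$ if $\lambda\in\mathrm{dom}(\Lambda')$, else undefined; and $\Lambda''=\bot$ if either of $\Lambda,\Lambda'$ is $\bot$. The relation $e\Downarrow_\rho c,w$ is the least relation closed under the rules: - $r \Downarrow_\rho \rho(r),(0,0,\emptyset,[])$ if $r\in\mathrm{dom}(\rho)$. - If $e_i\Downarrow_\rho c_i,w_i$ for all $i$ and $c=\mathit{prim}(c_1,\dots,c_n)$, then $\mathit{prim}_l(e_1,\dots,e_n)\Downarrow_\rho c, w_1\oplus\cdots\oplus w_n$. - If $e_i\Downarrow_\rho c_i,(p_i,q_i,d_i,L_i)$ for all $i$ and $c\sim\mathit{black}(c_1,\dots,c_n)$, then $\mathit{black}_l(e_1,\dots,e_n)\Downarrow_\rho c,(\sum_i p_i,\sum_i q_i,\bot,\mathit{concat}(L_1,\dots,L_n,[l]))$. - If $e_i\Downarrow_\rho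 c_i,w_i$ for all $i$, $(Q,\lambda)$ is the proposal distribution with parameters associated with label $l$, $c\sim Q(c_1,\dots,c_n;\lambda)$, $p$ is the log density of $\mathit{erp}(c_1,\dots,c_n)$ at $c$, $q$ the log density of $Q(c_1,\dots,c_n;\lambda)$ at $c$, and $g$ its gradient with respect to $\lambda$, then $\mathit{erp}_l(e_1,\dots,e_n)\Downarrow_\rho c, w_1\oplus\cdots\oplus w_n\oplus(p,q,[l:g],[l])$. - If $e_1\Downarrow_\rho c,w$ with $c\neq 0$ and $e_2\Downarrow_\rho c',w'$, then $\mathbf{if}\;e_1\,e_2\,e_3\Downarrow_\rho c',w\oplus w'$; if $e_1\Downarrow_\rho 0,w$ and $e_3\Downarrow_\rho c',w'$, then $\mathbf{if}\;e_1\,e_2\,e_3\Downarrow_\rho c',w\oplus w'$. - If $e_i\Downarrow_\rho c_i,w_i$ for all $i$ and $p$ is the log density of $\mathit{erp}(c_1,\dots,c_n)$ at $c$, then $\mathbf{obs}(c,\mathit{erp}_l(e_1,\dots,e_n))\Downarrow_\rho c, w_1\oplus\cdots\oplus w_n\oplus(p,0,\emptyset,[l])$. One-step spreadsheet evaluation: $\rho\xrightarrow{p,q,\Lambda,L}_f\rho'$ holds if $r$ is the $\prec$-least element of $\mathit{Ref}\setminus\mathrm{dom}(\rho)$, $f(r)\Downarrow_\rho c,(p,q,\Lambda,L)$, and $\rho'=\rho[r:c]$ (the update of $\rho$ binding $r$ to $c$). *)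

From Stdlib Require Import Reals List Relations.
Import ListNotations.
Open Scope R_scope.

Set Implicit Arguments.

Definition label := nat.

Inductive ERP := Gaussian | Choice | Between | Near.

Inductive Op :=
| OPrim  (n : nat)
| OBlack (n : nat)      (* user-defined (possibly stochastic) black box, by name *)
| OErp   (d : ERP).

Inductive Expr (Ref : Type) :=
| EConst (c : R)
| ERef (r : Ref)
| EApp (o : Op) (l : label) (es : list (Expr Ref))
| EIf (e1 e2 e3 : Expr Ref)
| EObs (c : R) (d : ERP) (l : label) (es : list (Expr Ref)).
Arguments EConst {Ref}.

Fixpoint refs (Ref : Type) (e : Expr Ref) : list Ref :=
  match e with
  | EConst _ => []
  | ERef r => [r]
  | EApp _ _ es => flat_map (@refs Ref) es
  | EIf e1 e2 e3 => refs e1 ++ refs e2 ++ refs e3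
  | EObs _ _ _ es => flat_map (@refs Ref) es
  end.

Record Interp := {
  prim_sem     : nat -> list R -> option R;
  black_supp   : nat -> list R -> R -> Prop;    (* c ~ black(c1..cn): c is a possible sample *)
  erp_logdens  : ERP -> list R -> R -> R;
  prop_supp    : label -> list R -> R -> Prop;  (* c ~ Q(c1..cn; lambda) for the proposal (Q,lambda) of label l *)
  prop_logdens : label -> list R -> R -> R;
  prop_grad    : label -> list R -> R -> list R (* its gradient w.r.t. lambda *)
}.

(** Bookkeeping tuples w = (p, q, Lambda, L).  Lambda is either bottom (None)
    or a finite map from labels to real sequences (Some m). *)
Definition LMap := label -> option (list R).
Record W := mkW { wp : R; wq : R; wlam : option LMap; wL : list label }.

Definition lmap_empty : LMap := fun _ => None.
Definition lmap_single (l : label) (g : list R) : LMap :=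
  fun x => if Nat.eqb x l then Some g else None.

Definition wzero : W := mkW 0 0 (Some lmap_empty) [].

Definition wplus (w w' : W) : W :=
  mkW (wp w + wp w') (wq w + wq w')
      (match wlam w, wlam w' with
       | Some m, Some m' =>
           Some (fun x => match m x with Some v => Some v | None => m' x end)
       | _, _ => None
       end)
      (wL w ++ wL w').

Definition wsum (ws : list W) : W := fold_right wplus wzero ws.

Definition State (Ref : Type) := Ref -> option R.

Record Judg (Ref : Type) := mkJ { jexpr : Expr Ref; jval : R; jw : W }.

Section Rules.
Variables (I : Interp) (Ref : Type) (rho : State Ref).

(** [Inst prem concl]: there is an instance of an evaluation rule (relative
    to the state rho) with premises [prem] and conclusion [concl]. *)
Inductive Inst : list (Judg Ref) -> Judg Ref -> Prop :=
| I_const : forall c,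
    Inst [] (mkJ (EConst c) c wzero)
| I_ref : forall r c, rho r = Some c ->
    Inst [] (mkJ (ERef r) c wzero)
| I_prim : forall n l prem c,
    prim_sem I n (map (@jval Ref) prem) = Some c ->
    Inst prem (mkJ (EApp (OPrim n) l (map (@jexpr Ref) prem)) c
                   (wsum (map (@jw Ref) prem)))
| I_black : forall n l prem c,
    black_supp I n (map (@jval Ref) prem) c ->
    Inst prem (mkJ (EApp (OBlack n) l (map (@jexpr Ref) prem)) c
                   (let s := wsum (map (@jw Ref) prem) in
                    mkW (wp s) (wq s) None (wL s ++ [l])))
| I_erp : forall d l prem c,
    let cs := map (@jval Ref) prem in
    prop_supp I l cs c ->
    Inst prem (mkJ (EApp (OErp d) l (map (@jexpr Ref) prem)) c
                   (wplus (wsum (map (@jw Ref) prem))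
                          (mkW (erp_logdens I d cs c) (prop_logdens I l cs c)
                               (Some (lmap_single l (prop_grad I l cs c))) [l])))
| I_if_true : forall e1 e2 e3 c w c' w', c <> 0 ->
    Inst [mkJ e1 c w; mkJ e2 c' w'] (mkJ (EIf e1 e2 e3) c' (wplus w w'))
| I_if_false : forall e1 e2 e3 w c' w',
    Inst [mkJ e1 0 w; mkJ e3 c' w'] (mkJ (EIf e1 e2 e3) c' (wplus w w'))
| I_obs : forall c d l prem,
    let cs := map (@jval Ref) prem in
    Inst prem (mkJ (EObs c d l (map (@jexpr Ref) prem)) c
                   (wplus (wsum (map (@jw Ref) prem))
                          (mkW (erp_logdens I d cs c) 0 (Some lmap_empty) [l]))).

Inductive eval : Judg Ref -> Prop :=
| ev : forall prem concl, Inst prem concl -> Forall eval prem -> eval concl.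

CoInductive cderiv : Judg Ref -> Prop :=
| cd : forall prem concl, Inst prem concl -> Forall cderiv prem -> cderiv concl.

(** [inf_deriv j]: there is an infinite derivation tree with conclusion j
    (trees are finitely branching, so infinite = has an infinite branch). *)
CoInductive inf_deriv : Judg Ref -> Prop :=
| idv : forall prem concl, Inst prem concl -> Forall cderiv prem ->
    Exists inf_deriv prem -> inf_deriv concl.
End Rules.

Definition Spreadsheet (Ref : Type) := Ref -> Expr Ref.

Definition dep_edge (Ref : Type) (f : Spreadsheet Ref) (r r' : Ref) : Prop :=
  In r (refs (f r')).

Definition well_formed (Ref : Type) (f : Spreadsheet Ref) : Prop :=
  ~ exists r, clos_trans Ref (dep_edge f) r r.

Definition prec (Ref : Type) (en : list Ref) (r r' : Ref) : Prop :=
  exists i j, (i < j)%nat /\ nth_error en i = Some r /\ nth_error en j = Some r'.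

(** en is a topological enumeration of the (finite) set Ref for the graph of f. *)
Definition topo_enum (Ref : Type) (f : Spreadsheet Ref) (en : list Ref) : Prop :=
  NoDup en /\ (forall r, In r en) /\
  (forall r r', dep_edge f r r' -> prec en r r').

Definition is_state (Ref : Type) (en : list Ref) (rho : State Ref) : Prop :=
  forall r r', prec en r r' -> rho r' <> None -> rho r <> None.

Definition least_undef (Ref : Type) (en : list Ref) (rho : State Ref) (r : Ref) : Prop :=
  rho r = None /\ forall r', rho r' = None -> r' = r \/ prec en r r'.

Definition step (I : Interp) (Ref : Type) (en : list Ref) (f : Spreadsheet Ref)
    (rho : State Ref) (w : W) (rho' : State Ref) : Prop :=
  exists r c, least_undef en rho r /\
    eval I rho (mkJ (f r) c w) /\
    rho' r = Some c /\ (forall r', r' <> r -> rho' r' = rho r').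

(** A derivation of [e ⇓ c, w] has only subexpressions of [e] in its premises,
    so the size of the expression strictly decreases along every branch of a
    derivation tree and no branch can be infinite.  A one-step evaluation keeps
    every defined cell defined and defines one more, so the number of defined
    cells among the finitely many cells of [Ref] strictly increases along a
    sequence of steps, which therefore cannot be infinite.  Neither argument
    needs well-formedness or the order of the enumeration: only its
    completeness, i.e. the finiteness of [Ref], is used. *)

From Stdlib Require Import Reals List Relations Wf_nat Lia.
Import ListNotations.
Local Open Scope nat_scope.
Set Implicit Arguments.

Fixpoint expr_size {Ref : Type} (e : Expr Ref) : nat :=
  match e with
  | EConst _ | ERef _ => 1
  | EApp _ _ es | EObs _ _ _ es => S (list_sum (map (@expr_size Ref) es))
  | EIf e1 e2 e3 => S (expr_size e1 + expr_size e2 + expr_size e3)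
  end.

Lemma le_list_sum (l : list nat) n : In n l -> n <= list_sum l.
Proof.
  induction l as [|m l IH]; simpl; [tauto|].
  intros [<- | Hn]; [lia | specialize (IH Hn); lia].
Qed.

Lemma expr_size_arg_lt (Ref : Type) (es : list (Expr Ref)) e :
  In e es -> expr_size e < S (list_sum (map (@expr_size Ref) es)).
Proof. intros He. apply (in_map (@expr_size Ref)), le_list_sum in He. lia. Qed.

Lemma Inst_premise_smaller I Ref rho prem concl :
  @Inst I Ref rho prem concl ->
  forall p, In p prem -> expr_size (jexpr p) < expr_size (jexpr concl).
Proof.
  intros Hinst p Hp.
  destruct Hinst; simpl in Hp |- *;
    solve [ contradiction
          | apply expr_size_arg_lt, in_map; exact Hp
          | destruct Hp as [<- | [<- | []]]; simpl; lia ].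
Qed.

Lemma not_inf_deriv I Ref rho (j : Judg Ref) : ~ inf_deriv I rho j.
Proof.
  induction j as [j IH] using (induction_ltof1 _ (fun j => expr_size (jexpr j))).
  intros Hinf; destruct Hinf as [prem concl Hinst _ Hex].
  apply Exists_exists in Hex as [p [Hp Hinf_p]].
  exact (IH p (Inst_premise_smaller Hinst p Hp) Hinf_p).
Qed.

Lemma filter_length_mono (A : Type) (b1 b2 : A -> bool) (l : list A) :
  (forall x, b1 x = true -> b2 x = true) ->
  length (filter b1 l) <= length (filter b2 l).
Proof.
  intros Hb; induction l as [|y l IH]; simpl; [lia|].
  destruct (b1 y) eqn:E1; [rewrite (Hb y E1) | destruct (b2 y)]; simpl; lia.
Qed.

Lemma filter_length_lt (A : Type) (b1 b2 : A -> bool) (l : list A) x :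
  (forall y, b1 y = true -> b2 y = true) ->
  In x l -> b1 x = false -> b2 x = true ->
  length (filter b1 l) < length (filter b2 l).
Proof.
  intros Hb Hx H1 H2; induction l as [|y l IH]; simpl in Hx |- *; [contradiction|].
  destruct Hx as [-> | Hx].
  - rewrite H1, H2; simpl. pose proof (filter_length_mono b1 b2 l Hb); lia.
  - specialize (IH Hx).
    destruct (b1 y) eqn:E1; [rewrite (Hb y E1) | destruct (b2 y)]; simpl; lia.
Qed.

Lemma strictly_increasing_unbounded (m : nat -> nat) :
  (forall k, m k < m (S k)) -> forall k, k <= m k.
Proof. intros Hm; induction k; [lia | specialize (Hm k); lia]. Qed.

Definition is_defined {Ref : Type} (rho : State Ref) (r : Ref) : bool :=
  match rho r with Some _ => true | None => false end.

Definition defined_count {Ref : Type} (en : list Ref) (rho : State Ref) : nat :=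
  length (filter (is_defined rho) en).

Section Steps.
Variables (I : Interp) (Ref : Type) (en : list Ref) (f : Spreadsheet Ref).

Lemma step_preserves_defined rho w rho' :
  step I en f rho w rho' ->
  forall r, is_defined rho r = true -> is_defined rho' r = true.
Proof.
  intros [r0 [c [_ [_ [Hr0 Hother]]]]] r.
  unfold is_defined.
  destruct (rho' r) eqn:Er; [reflexivity|].
  assert (Hne : r <> r0) by (intros ->; congruence).
  rewrite <- (Hother r Hne), Er; trivial.
Qed.

Lemma step_defines_new rho w rho' :
  step I en f rho w rho' -> exists r, is_defined rho r = false /\ is_defined rho' r = true.
Proof.
  intros [r [c [[Hundef _] [_ [Hr _]]]]].
  exists r; unfold is_defined; rewrite Hundef, Hr; auto.
Qed.

Lemma step_defined_count_lt rho w rho' :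
  (forall r, In r en) -> step I en f rho w rho' ->
  defined_count en rho < defined_count en rho'.
Proof.
  intros Hall Hstep.
  destruct (step_defines_new Hstep) as [r [Hold Hnew]].
  apply (filter_length_lt (is_defined rho) _ _ r); auto.
  exact (step_preserves_defined Hstep).
Qed.

End Steps.

Theorem mainTheorem1 (I : Interp) (Ref : Type) (f : Spreadsheet Ref) (en : list Ref) :
  well_formed f -> topo_enum f en ->
  (* (1) no infinite sequence of one-step spreadsheet evaluations *)
  (~ exists (rho : nat -> State Ref) (w : nat -> W),
       (forall k, is_state en (rho k)) /\
       (forall k, step I en f (rho k) (w k) (rho (S k)))) /\
  (* (2) no infinite derivation tree for any judgement e ⇓_rho c, w *)
  (forall (rho : State Ref) (e : Expr Ref) (c : R) (w : W),
       is_state en rho -> ~ inf_deriv I rho (mkJ e c w)).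
Proof.
  intros _ [_ [Hall _]]. split.
  - intros [rho [w [_ Hsteps]]].
    set (m k := defined_count en (rho k)).
    assert (Hgrow : forall k, k <= m k).
    { apply strictly_increasing_unbounded; intros k.
      exact (step_defined_count_lt Hall (Hsteps k)). }
    specialize (Hgrow (S (length en))).
    pose proof (filter_length_le (is_defined (rho (S (length en)))) en).
    unfold m, defined_count in Hgrow; lia.
  - intros rho e c w _. apply not_inf_deriv.
Qed.
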